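(* Let $S_X,S_Y$ be finite nonempty action sets, $\varphi:S_X\times S_Y\to\mathbb{R}$ and $\lambda\in[0,1]$. If there exists a $(\varphi,\lambda)$-autocratic behavioral strategy for $X$, then for every $\lambda^*\in[\lambda,1]$ there exists a two-point reactive learning strategy for $X$ that is $(\varphi,\lambda^* )$-autocratic.
   Context: Two players $X,Y$ play a repeated game with finite action sets $S_X,S_Y$; $\Delta(S)$ denotes the probability distributions on $S$. $\varphi(\tau_X,s_Y)=\mathbb{E}_{s_X\sim\tau_X}[\varphi(s_X,s_Y)]$. Histories: $\mathcal{H}=\bigcup_{T\ge0}(S_X\times S_Y)^T$; behavioral strategies are maps $\sigma:\mathcal{H}\to\Delta(S)$; players independently draw actions each round from their strategies evaluated at the history of realized action pairs, with $\mathbb{E}_{\sigma_X,\sigma_Y}$ the expectation over the resulting play. For $\lambda\in[0,1)$, $\sigma_X$ is $(\varphi,\lambda)$-autocratic if for every behavioral strategy $\sigma_Y$ of $Y$, $\mathbb{E}_{\sigma_X,\sigma_Y}\big[(1-\lambda)\sum_{t\ge0}\lambda^t\varphi(s_X^t,s_Y^t)\big]=0$; $\sigma_X$ is $(\varphi,1)$-autocratic if for every behavioral strategy $\sigma_Y$ of $Y$ the limit $\lim_{T\to\infty}\frac1{T+1}\sum_{t=0}^T\mathbb{E}_{\sigma_X,\sigma_Y}[\varphi(s_X^t,s_Y^t)]$ exists and equals $0$. A reactive learning strategy $(\sigma_X^0,\sigma_X^* )$, $\sigma_X^0\in\Delta(S_X)$, $\sigma_X^*:\Delta(S_X)\times S_Y\to\Delta(S_X)$,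 plays $\tau_X^0=\sigma_X^0$ in round $0$ and $\tau_X^{t+1}=\sigma_X^*[\tau_X^t,s_Y^t]$ in round $t+1$ ($s_Y^t$ being $Y$'s realized action in round $t$). It is two-point if there exist $\tau_X^\pm\in\Delta(S_X)$, $p_0\in[0,1]$, $p^*:[0,1]\times S_Y\to[0,1]$ with $\sigma_X^0=p_0\tau_X^++(1-p_0)\tau_X^-$ and $\sigma_X^*[p\tau_X^++(1-p)\tau_X^-,s_Y]=p^*[p,s_Y]\tau_X^++(1-p^*[p,s_Y])\tau_X^-$ for all $p\in[0,1]$, $s_Y\in S_Y$. *)

From HB Require Import structures.
From mathcomp Require Import all_boot all_order all_algebra.
From mathcomp Require Import all_classical all_reals all_analysis.
Set Implicit Arguments. Unset Strict Implicit. Unset Printing Implicit Defensive.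
Import Order.TTheory GRing.Theory Num.Theory.
Import numFieldTopology.Exports numFieldNormedType.Exports.
Local Open Scope classical_set_scope.
Local Open Scope ring_scope.

Record dist (R : realType) (S : finType) := Dist {
  pmf :> S -> R;
  pmf_ge0 : forall s, 0 <= pmf s;
  pmf_sum1 : \sum_(s : S) pmf s = 1 }.

Section Game.
Variables (R : realType) (SX SY : finType).

(* histories are finite sequences of realized action pairs, oldest first *)
Definition history := seq (SX * SY).

Definition stratX := history -> dist R SX.
Definition stratY := history -> dist R SY.

Fixpoint hist_prob_aux (sX : stratX) (sY : stratY) (past future : history) : R :=
  match future with
  | [::] => 1
  | (a, b) :: f => sX past a * sY past b * hist_prob_aux sX sY (rcons past (a, b)) f
  end.

(* probability that the history after round t-1 is h (size h = t) *)
Definition hist_prob sX sY (h : history) := hist_prob_aux sX sY [::] h.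

Definition exp_payoff (phi : SX -> SY -> R) (sX : stratX) (sY : stratY) (t : nat) : R :=
  \sum_(h : t.-tuple (SX * SY))
     hist_prob sX sY (val h) *
     \sum_(a : SX) \sum_(b : SY) sX (val h) a * sY (val h) b * phi a b.

(* For lambda < 1 the expectation of the
   (bounded, absolutely convergent) discounted sum is the series of the
   per-round expectations; for lambda = 1 the Cesaro definition. *)
Definition autocratic (phi : SX -> SY -> R) (lambda : R) (sX : stratX) : Prop :=
  forall sY : stratY,
    if lambda < 1 then
      (fun n => \sum_(t < n) (1 - lambda) * lambda ^+ t * exp_payoff phi sX sY t)
        @ \oo --> (0 : R^o)
    else
      (fun T => (T.+1)%:R^-1 * \sum_(t < T.+1) exp_payoff phi sX sY t)
        @ \oo --> (0 : R^o).

Definition reactive (s0 : dist R SX) (sstar : dist R SX -> SY -> dist R SX) : stratX :=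
  fun h => foldl (fun tau p => sstar tau p.2) s0 h.

Definition two_point (s0 : dist R SX) (sstar : dist R SX -> SY -> dist R SX) : Prop :=
  exists (tp tm : dist R SX) (p0 : R) (pstar : R -> SY -> R),
    [/\ 0 <= p0 <= 1,
        (forall p s, 0 <= p <= 1 -> 0 <= pstar p s <= 1),
        (forall a, s0 a = p0 * tp a + (1 - p0) * tm a) &
        (forall (p : R) (s : SY) (d : dist R SX), 0 <= p <= 1 ->
           (forall a, d a = p * tp a + (1 - p) * tm a) ->
           forall a, sstar d s a = pstar p s * tp a + (1 - pstar p s) * tm a)].

End Game.

From Pilot Require Import Defs.
From HB Require Import structures.
From mathcomp Require Import all_boot all_order all_algebra.
From mathcomp Require Import all_classical all_reals all_analysis.
From mathcomp Require Import ring lra.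
Import Order.TTheory GRing.Theory Num.Theory.
Import numFieldTopology.Exports numFieldNormedType.Exports.
Import ArrowAsProduct.
Set Implicit Arguments. Unset Strict Implicit. Unset Printing Implicit Defensive.
Local Open Scope classical_set_scope.
Local Open Scope ring_scope.

(* For 0 < l <= 1, being (phi, l)-autocratic amounts to having a pair tp, tm
   that brackets an interval [B, A] around 0 (see [bracketing]); brackets for
   l remain brackets for every l' >= l, and a bracket for l' is realised by a
   two-point reactive strategy.
   Necessity for l < 1: on histories reachable under an autocratic strategy,
   the continuation value v = sum_t l^t E phi_t cannot depend on Y's strategy,
   so v(h) = phi(sX h, y) + l E v(h (a, y)) for every y; the strategies at
   histories where v is close to sup v or to inf v, together with compactness
   of the simplex, give tp and tm for A = sup v and B = inf v.  For l = 1, if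
   no distribution made phi nonnegative against every y, Y could answer every
   move so as to keep the Cesaro averages below some -e < 0.
   Sufficiency: X keeps a weight p, plays p tp + (1 - p) tm, and after Y's
   action y moves to the weight p' with V(p) = phi(tau_p, y) + l V(p'), where
   V(p) = B + p (A - B).  The discounted sums then telescope to
   V(p_0) - l^n E V(p_n) with V(p_0) = 0.
   For l = 0 the first-round strategy of X already has payoff 0 against every
   y, and playing it forever works. *)

(** * Expectations under finite distributions *)

Section Expectation.
Variables (R : realType) (T : finType).
Implicit Types (d : dist R T) (f g : T -> R).

Definition expect d f := \sum_x d x * f x.

Lemma pmf_le1 d x : d x <= 1.
Proof.
rewrite -(Defs.pmf_sum1 d) (bigD1 x) //= lerDl.
by apply: sumr_ge0 => i _; exact: Defs.pmf_ge0.
Qed.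

Lemma expect_cst d k : expect d (fun _ => k) = k.
Proof. by rewrite /expect -mulr_suml Defs.pmf_sum1 mul1r. Qed.

Lemma eq_expect d f g : f =1 g -> expect d f = expect d g.
Proof. by move=> fg; apply: eq_bigr => x _; rewrite fg. Qed.

Lemma ler_expect d f g :
  (forall x, 0 < d x -> f x <= g x) -> expect d f <= expect d g.
Proof.
move=> fg; apply: ler_sum => x _; have := Defs.pmf_ge0 d x.
rewrite le0r => /orP[/eqP ->|dx]; first by rewrite !mul0r.
by rewrite ler_wpM2l ?fg ?ltW.
Qed.

Lemma expectD d f g :
  expect d (fun x => f x + g x) = expect d f + expect d g.
Proof. by rewrite /expect -big_split; apply: eq_bigr => x _; rewrite mulrDr. Qed.

Lemma expectZ d k f : expect d (fun x => k * f x) = k * expect d f.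
Proof. by rewrite /expect mulr_sumr; apply: eq_bigr => x _; ring. Qed.

Lemma expect_sum d n (F : 'I_n -> T -> R) :
  expect d (fun x => \sum_(i < n) F i x) = \sum_(i < n) expect d (F i).
Proof.
by rewrite /expect; under eq_bigr do rewrite mulr_sumr; rewrite exchange_big.
Qed.

Lemma expect_bounds d f lo hi :
  (forall x, lo <= f x <= hi) -> lo <= expect d f <= hi.
Proof.
move=> fb; rewrite -[lo](expect_cst d) -[hi](expect_cst d).
by apply/andP; split; apply: ler_expect => x _; case/andP: (fb x).
Qed.

Lemma norm_expect_le d f K : (forall x, `|f x| <= K) -> `|expect d f| <= K.
Proof.
by move=> fK; rewrite ler_norml; apply: expect_bounds => x; rewrite -ler_norml.
Qed.

Definition point_pmf (y x : T) : R := (x == y)%:R.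

Lemma point_pmf_ge0 y x : 0 <= point_pmf y x.
Proof. exact: ler0n. Qed.

Lemma point_pmf_sum1 y : \sum_x point_pmf y x = 1.
Proof.
by rewrite (bigD1 y) //= /point_pmf eqxx big1 ?addr0 // => x /negbTE ->.
Qed.

Definition point_dist y : dist R T := Dist (point_pmf_ge0 y) (point_pmf_sum1 y).

Lemma expect_point y f : expect (point_dist y) f = f y.
Proof.
rewrite /expect (bigD1 y) //= /point_pmf eqxx mul1r big1 ?addr0 //.
by move=> x /negbTE ->; rewrite mul0r.
Qed.

(* Weights outside [0, 1] are replaced by 0, which makes [mix_dist] total. *)
Definition clamp01 (p : R) := if 0 <= p <= 1 then p else 0.

Lemma clamp01_bounds p : 0 <= clamp01 p <= 1.
Proof. by rewrite /clamp01; case: ifP => // _; rewrite lexx ler01. Qed.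

Lemma clamp01_id p : 0 <= p <= 1 -> clamp01 p = p.
Proof. by rewrite /clamp01 => ->. Qed.

Section Mixture.
Variables (d1 d2 : dist R T) (p : R).

Definition mix_pmf x := clamp01 p * d1 x + (1 - clamp01 p) * d2 x.

Lemma mix_pmf_ge0 x : 0 <= mix_pmf x.
Proof.
have /andP[p_ge0 p_le1] := clamp01_bounds p.
by rewrite addr_ge0 // mulr_ge0 ?Defs.pmf_ge0 ?subr_ge0.
Qed.

Lemma mix_pmf_sum1 : \sum_x mix_pmf x = 1.
Proof. by rewrite big_split /= -!mulr_sumr !Defs.pmf_sum1; ring. Qed.

Definition mix_dist : dist R T := Dist mix_pmf_ge0 mix_pmf_sum1.

Hypothesis p01 : 0 <= p <= 1.

Lemma mix_distE x : mix_dist x = p * d1 x + (1 - p) * d2 x.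
Proof. by rewrite /= /mix_pmf clamp01_id. Qed.

Lemma expect_mix f : expect mix_dist f = p * expect d1 f + (1 - p) * expect d2 f.
Proof.
rewrite /expect; under eq_bigr do rewrite mix_distE.
by rewrite !mulr_sumr -big_split /=; apply: eq_bigr => x _; ring.
Qed.

End Mixture.
End Expectation.

Lemma expect_swap (R : realType) (T1 T2 : finType) (d1 : dist R T1)
    (d2 : dist R T2) (F : T1 -> T2 -> R) :
  expect d1 (fun a => expect d2 (F a)) = expect d2 (fun b => expect d1 (F^~ b)).
Proof.
rewrite /expect; under eq_bigr do rewrite mulr_sumr.
rewrite exchange_big /=; apply: eq_bigr => b _; rewrite mulr_sumr.
by apply: eq_bigr => a _; ring.
Qed.

Section DistCompactness.
Variables (R : realType) (T : finType).

Lemma dist_cluster_point (dn : nat -> dist R T) : exists d : dist R T,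
  forall (f : T -> R) e N, 0 < e ->
    exists2 n, (N <= n)%N & `|expect d f - expect (dn n) f| < e.
Proof.
pose cube := [set q : T -> R^o | forall x, `[(0 : R), 1]%classic (q x)].
have cube_compact : compact cube := tychonoff (fun _ => @segment_compact R 0 1).
pose F := (fun n => dn n : T -> R^o) @ \oo.
have F_cube : F cube.
  by exists 0%N => // n _ x /=; rewrite in_itv /= Defs.pmf_ge0 pmf_le1.
have [p [p_cube p_cluster]] := cube_compact F _ F_cube.
have near_p f e N : 0 < e ->
    exists2 n, (N <= n)%N & `|\sum_x p x * f x - expect (dn n) f| < e.
  move=> e_gt0.
  have pairing_cont :
      (fun q : T -> R^o => \sum_x q x * f x) @ p --> \sum_x p x * f x.
    apply: (@cvg_big _ _ +%R 0 xpredT add_continuous); first exact: nbhs_filter.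
    move=> x _; apply: cvgMr_tmp; first exact: nbhs_filter.
    exact: (@proj_continuous T (fun _ => R^o) x p).
  have := @cvgr_dist_lt _ _ _ _ (nbhs_filter p) _ _ pairing_cont e e_gt0.
  have F_tail : F [set q : T -> R^o | exists2 n, (N <= n)%N & q = dn n].
    by exists N => // n Nn; exists n.
  by move=> /(p_cluster _ _ F_tail) [_ [[n Nn ->] ?]]; exists n.
have p_ge0 x : 0 <= p x by have := p_cube x; rewrite /= in_itv => /andP[].
have p_sum1 : \sum_x p x = 1.
  have sum_p_near e : 0 < e -> `|\sum_x p x - 1| < e.
    move=> /(near_p (fun _ => 1) _ 0%N) [n _].
    by rewrite expect_cst; under eq_bigr do rewrite mulr1.
  apply/eqP; rewrite -subr_eq0 -normr_le0.
  by apply/ler_addgt0Pr => e e_gt0; rewrite add0r ltW ?sum_p_near.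
by exists (Dist p_ge0 p_sum1) => f e N; apply: near_p.
Qed.

Lemma dist_of_approx_bounds (I : Type) (f : T -> I -> R) (L U : I -> R) :
  (forall e, 0 < e -> exists d : dist R T,
     forall i, L i - e <= expect d (f^~ i) <= U i + e) ->
  exists d : dist R T, forall i, L i <= expect d (f^~ i) <= U i.
Proof.
move=> approx.
have approx_n (n : nat) : exists d : dist R T, forall i,
    L i - n.+1%:R^-1 <= expect d (f^~ i) <= U i + n.+1%:R^-1.
  by apply: approx; rewrite invr_gt0 ltr0n.
have [dn dn_bounds] := choice approx_n.
have [d d_cluster] := dist_cluster_point dn.
have d_bounds i e : 0 < e -> L i - e <= expect d (f^~ i) <= U i + e.
  move=> e_gt0; have e2_gt0 : 0 < e / 2 by rewrite divr_gt0.
  have [N _ N_small] := near_infty_natSinv_lt (PosNum e2_gt0).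
  have [n Nn] := d_cluster (f^~ i) _ N e2_gt0.
  have /= n_small := N_small n Nn; have /andP[lo hi] := dn_bounds n i.
  rewrite ltr_distl => /andP[lt1 lt2].
  move: (expect d _) (expect (dn n) _) (n.+1%:R^-1) lo hi lt1 lt2 n_small.
  move=> a b c *.
  apply/andP; split; lra.
exists d => i; apply/andP; split;
  apply/ler_addgt0Pr => e /(d_bounds i) /andP[lo hi].
- by rewrite -lerBlDr.
- exact: hi.
Qed.

End DistCompactness.

Lemma cvg0_of_norm_le (R : realType) (u v : nat -> R) :
  (forall n, `|u n| <= v n) -> v @ \oo --> (0 : R) -> u @ \oo --> (0 : R).
Proof.
move=> uv v0; apply: (squeeze_cvgr (f := fun n => - v n) (h := v)) => //.
- by apply: nearW => n; rewrite -ler_norml.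
- by rewrite -oppr0; apply: cvgN.
Qed.

Section DiscountedSums.
Variables (R : realType) (u : nat -> R) (l K : R).
Hypotheses (l_gt0 : 0 < l) (l_lt1 : l < 1) (u_le : forall t, `|u t| <= K).

Let normu_le_geometric t : `|l ^+ t * u t| <= geometric K l t.
Proof.
have lt_ge0 : 0 <= l ^+ t by rewrite exprn_ge0 ?ltW.
by rewrite normrM (ger0_norm lt_ge0) /= mulrC ler_wpM2r.
Qed.

Let seriesE (f : nat -> R) : series f = (fun n => \sum_(t < n) f t).
Proof. by apply: funext => n; rewrite /series /= big_mkord. Qed.

Lemma is_cvg_discounted_sum : cvgn (fun n => \sum_(t < n) l ^+ t * u t).
Proof.
rewrite -(seriesE (fun t => l ^+ t * u t)); apply: (@normed_cvg _ R^o).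
apply: series_le_cvg.
- by move=> t; rewrite normr_ge0.
- by move=> t; apply: le_trans (normu_le_geometric t).
- exact: normu_le_geometric.
- by apply: is_cvg_geometric_series; rewrite ger0_norm ?ltW.
Qed.

Lemma norm_discounted_sum_le n : `|\sum_(t < n) l ^+ t * u t| <= K / (1 - l).
Proof.
have K_ge0 : 0 <= K by rewrite (le_trans (normr_ge0 _) (u_le 0)).
apply: le_trans (ler_norm_sum _ _ _) _.
apply: le_trans (geometric_le_lim n K_ge0 l_gt0 _).
  by rewrite seriesE ler_sum // => t _; exact: normu_le_geometric.
by rewrite ger0_norm ?ltW.
Qed.

End DiscountedSums.

(** * Conditional payoffs in the repeated game *)

Section Play.
Variables (R : realType) (SX SY : finType).
Local Notation stX := (stratX R SX SY).
Local Notation stY := (stratY R SX SY).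
Local Notation hist := (history SX SY).
Implicit Types (phi : SX -> SY -> R) (sX : stX) (sY : stY) (g : hist).

Lemma finite_payoff_bounded phi : exists2 K, 0 <= K & forall a b, `|phi a b| <= K.
Proof.
exists (\sum_a \sum_b `|phi a b|) => [|a b].
  by apply: sumr_ge0 => a _; apply: sumr_ge0.
rewrite (bigD1 a) //= (bigD1 b) //= -addrA lerDl addr_ge0 ?sumr_ge0 //.
by move=> a' _; apply: sumr_ge0.
Qed.

Definition payoff phi (d : dist R SX) (y : SY) := expect d (phi^~ y).

Lemma norm_payoff_le phi K d y :
  (forall a b, `|phi a b| <= K) -> `|payoff phi d y| <= K.
Proof. by move=> phiK; apply: norm_expect_le => a; exact: phiK. Qed.

Lemma payoff_opp phi d y : payoff (fun a b => - phi a b) d y = - payoff phi d y.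
Proof. by rewrite -mulN1r -expectZ; apply: eq_expect => a; rewrite mulN1r. Qed.

Definition step_expect sX sY g (F : SX -> SY -> R) :=
  expect (sX g) (fun a => expect (sY g) (F a)).

Lemma step_expectE sX sY g F :
  step_expect sX sY g F = \sum_a \sum_b sX g a * sY g b * F a b.
Proof.
rewrite /step_expect /expect; apply: eq_bigr => a _; rewrite mulr_sumr.
by apply: eq_bigr => b _; rewrite mulrA.
Qed.

Lemma eq_step_expect sX sY g F G :
  (forall a b, F a b = G a b) -> step_expect sX sY g F = step_expect sX sY g G.
Proof. by move=> FG; apply: eq_expect => a; apply: eq_expect => b; apply: FG. Qed.

Lemma step_expect_cst sX sY g k : step_expect sX sY g (fun _ _ => k) = k.
Proof.
by rewrite /step_expect (eq_expect _ (fun a => expect_cst _ k)) expect_cst.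
Qed.

Lemma step_expectD sX sY g F G :
  step_expect sX sY g (fun a b => F a b + G a b) =
  step_expect sX sY g F + step_expect sX sY g G.
Proof.
by rewrite /step_expect -expectD; apply: eq_expect => a; rewrite expectD.
Qed.

Lemma step_expectZ sX sY g k F :
  step_expect sX sY g (fun a b => k * F a b) = k * step_expect sX sY g F.
Proof.
by rewrite /step_expect -expectZ; apply: eq_expect => a; rewrite expectZ.
Qed.

Lemma step_expectN sX sY g F :
  step_expect sX sY g (fun a b => - F a b) = - step_expect sX sY g F.
Proof.
by rewrite -mulN1r -step_expectZ; apply: eq_step_expect => a b; rewrite mulN1r.
Qed.

Lemma step_expect_sum sX sY g n (F : 'I_n -> SX -> SY -> R) :
  step_expect sX sY g (fun a b => \sum_(i < n) F i a b) =
  \sum_(i < n) step_expect sX sY g (F i).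
Proof.
rewrite /step_expect -expect_sum; apply: eq_expect => a; exact: expect_sum.
Qed.

Lemma step_expect_bounds sX sY g F lo hi :
  (forall a b, lo <= F a b <= hi) -> lo <= step_expect sX sY g F <= hi.
Proof. by move=> Fb; apply: expect_bounds => a; apply: expect_bounds. Qed.

Lemma step_expect_point sX sY g y F :
  sY g = point_dist R y -> step_expect sX sY g F = expect (sX g) (F^~ y).
Proof. by move=> sYg; apply: eq_expect => a; rewrite sYg expect_point. Qed.

Lemma cvg_step_expect sX sY g (Fn : nat -> SX -> SY -> R) F :
  (forall a b, (fun n => Fn n a b) @ \oo --> F a b) ->
  (fun n => step_expect sX sY g (Fn n)) @ \oo --> step_expect sX sY g F.
Proof.
move=> Fn_cvg; under eq_fun do rewrite step_expectE; rewrite step_expectE.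
apply: (@cvg_big _ _ +%R 0 xpredT add_continuous) => a _.
apply: (@cvg_big _ _ +%R 0 xpredT add_continuous) => b _.
exact: cvgMl_tmp.
Qed.

Fixpoint cond_payoff phi sX sY g t : R :=
  if t is t'.+1 then
    step_expect sX sY g (fun a b => cond_payoff phi sX sY (rcons g (a, b)) t')
  else step_expect sX sY g phi.

Lemma sum_tupleS (T : finType) t (F : seq T -> R) :
  \sum_(h : t.+1.-tuple T) F h = \sum_(z : T) \sum_(h : t.-tuple T) F (z :: h).
Proof.
rewrite pair_big /=.
rewrite (reindex (fun p : T * t.-tuple T => [tuple of p.1 :: p.2])) //.
exists (fun h : t.+1.-tuple T => (thead h, [tuple of behead h])).
  by move=> [z h] _ /=; congr pair; apply: val_inj.
by move=> h _; rewrite [RHS]tuple_eta; apply: val_inj.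
Qed.

Lemma cond_payoffE phi sX sY g t :
  cond_payoff phi sX sY g t =
  \sum_(h : t.-tuple (SX * SY)) hist_prob_aux sX sY g (val h) *
     \sum_a \sum_b sX (g ++ val h) a * sY (g ++ val h) b * phi a b.
Proof.
elim: t g => [|t IH] g.
  rewrite (big_pred1 [tuple]) => [|h]; last by rewrite [h]tuple0 /= eqxx.
  by rewrite /= cats0 mul1r step_expectE.
rewrite (sum_tupleS _ (fun h => hist_prob_aux sX sY g h *
  \sum_a \sum_b sX (g ++ h) a * sY (g ++ h) b * phi a b)).
rewrite /= step_expectE pair_big /=; apply: eq_bigr => -[a b] _.
rewrite IH mulr_sumr; apply: eq_bigr => h _.
by rewrite cat_rcons mulrA.
Qed.

Lemma exp_payoffE phi sX sY t :
  exp_payoff phi sX sY t = cond_payoff phi sX sY [::] t.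
Proof. by rewrite cond_payoffE. Qed.

Lemma cond_payoff_bounds phi lo hi sX sY g t :
  (forall a b, lo <= phi a b <= hi) -> lo <= cond_payoff phi sX sY g t <= hi.
Proof.
by move=> phib; elim: t g => [|t IH] g; apply: step_expect_bounds.
Qed.

Lemma norm_cond_payoff_le phi K sX sY g t :
  (forall a b, `|phi a b| <= K) -> `|cond_payoff phi sX sY g t| <= K.
Proof.
move=> phiK; rewrite ler_norml; apply: cond_payoff_bounds => a b.
by rewrite -ler_norml.
Qed.

Lemma cond_payoff_opp phi sX sY g t :
  cond_payoff (fun a b => - phi a b) sX sY g t = - cond_payoff phi sX sY g t.
Proof.
elim: t g => [|t IH] g /=; rewrite -step_expectN //.
by apply: eq_step_expect => a b; rewrite IH.
Qed.

Lemma cond_payoff_local phi sX sY1 sY2 g t :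
  (forall f, sY1 (g ++ f) = sY2 (g ++ f)) ->
  cond_payoff phi sX sY1 g t = cond_payoff phi sX sY2 g t.
Proof.
elim: t g => [|t IH] g sY12; have sY12g : sY1 g = sY2 g by rewrite -[g]cats0.
  by rewrite /= /step_expect sY12g.
rewrite /= /step_expect sY12g; apply: eq_expect => a; apply: eq_expect => b.
by apply: IH => f; rewrite cat_rcons.
Qed.

Definition disc_sum phi l sX sY g n :=
  \sum_(t < n) l ^+ t * cond_payoff phi sX sY g t.

Lemma disc_sumS phi l sX sY g n :
  disc_sum phi l sX sY g n.+1 = step_expect sX sY g phi +
    l * step_expect sX sY g (fun a b => disc_sum phi l sX sY (rcons g (a, b)) n).
Proof.
rewrite /disc_sum big_ord_recl /= expr0 mul1r step_expect_sum mulr_sumr.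
congr (_ + _); apply: eq_bigr => t _.
by rewrite step_expectZ /bump /= exprS mulrA.
Qed.

Lemma disc_sum_local phi l sX sY1 sY2 g n :
  (forall f, sY1 (g ++ f) = sY2 (g ++ f)) ->
  disc_sum phi l sX sY1 g n = disc_sum phi l sX sY2 g n.
Proof.
by move=> sY12; apply: eq_bigr => t _; rewrite (cond_payoff_local _ _ _ sY12).
Qed.

Lemma autocratic_discountedE phi l sX : l < 1 ->
  autocratic phi l sX <-> forall sY, disc_sum phi l sX sY [::] @ \oo --> (0 : R).
Proof.
move=> l_lt1; have l1_neq0 : 1 - l != 0 by rewrite subr_eq0 gt_eqF.
have seqE sY : (fun n => \sum_(t < n) (1 - l) * l ^+ t * exp_payoff phi sX sY t)
    = (fun n => (1 - l) * disc_sum phi l sX sY [::] n).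
  apply: funext => n; rewrite /disc_sum mulr_sumr.
  by apply: eq_bigr => t _; rewrite exp_payoffE mulrA.
rewrite /autocratic l_lt1; split => ac sY; have := ac sY; rewrite seqE.
- move=> /(cvgMl_tmp (a := (1 - l)^-1)); rewrite mulr0.
  by under eq_fun do rewrite mulKf //.
- by move=> /(cvgMl_tmp (a := 1 - l)); rewrite mulr0.
Qed.

Lemma autocratic_of_disc_sum_le phi l sX : 0 <= l <= 1 ->
  (forall sY, exists K, forall n, `|disc_sum phi l sX sY [::] n| <= K * l ^+ n) ->
  autocratic phi l sX.
Proof.
move=> /andP[l_ge0 l_le1] sum_le; have [l_lt1|l_ge1] := ltP l 1.
  apply/autocratic_discountedE => // sY; have [K leK] := sum_le sY.
  apply: cvg0_of_norm_le leK _; rewrite -(mulr0 K); apply: cvgMl_tmp.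
  by apply: cvg_expr; rewrite ger0_norm.
have {l_ge1 l_le1 l_ge0} l1 : l = 1 by apply: le_anti; rewrite l_le1.
subst l.
move=> sY; rewrite /autocratic ltxx; have [K leK] := sum_le sY.
apply: (@cvg0_of_norm_le _ _ (fun T => K * T.+1%:R^-1)) => [T|].
  have := leK T.+1; rewrite /disc_sum expr1n mulr1.
  under eq_bigr do rewrite expr1n mul1r -exp_payoffE.
  have inv_ge0 : 0 <= T.+1%:R^-1 :> R by rewrite invr_ge0.
  by move=> le; rewrite normrM (ger0_norm inv_ge0) mulrC ler_wpM2r.
rewrite -(mulr0 K); apply: cvgMl_tmp; exact: cvg_harmonic.
Qed.

Lemma autocratic_opp phi l sX :
  autocratic phi l sX -> autocratic (fun a b => - phi a b) l sX.
Proof.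
move=> ac sY; have := ac sY.
have oppE t :
    exp_payoff (fun a b => - phi a b) sX sY t = - exp_payoff phi sX sY t.
  by rewrite !exp_payoffE cond_payoff_opp.
case: ifP => _ /cvgN; rewrite oppr0; apply: cvg_trans; apply: near_eq_cvg;
  apply: nearW => n /=; rewrite opprfctE /= -?mulrN -sumrN;
  by under eq_bigr do rewrite oppE ?mulrN.
Qed.

(* With tp worth A and tm worth B, every answer y leaves a continuation value
   (A - payoff tp y) / l, resp. (B - payoff tm y) / l, inside [B, A]. *)
Definition bracketing phi l (tp tm : dist R SX) (A B : R) :=
  B <= 0 <= A /\ forall y,
    (1 - l) * A <= payoff phi tp y <= A - l * B /\
    B - l * A <= payoff phi tm y <= (1 - l) * B.

Lemma bracketing_mono phi l l' tp tm A B : l <= l' ->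
  bracketing phi l tp tm A B -> bracketing phi l' tp tm A B.
Proof.
move=> le_ll' [/andP[B_le0 A_ge0] br]; split=> [|y]; first by rewrite B_le0.
have [/andP[p1 p2] /andP[m1 m2]] := br y.
by split; apply/andP; split; nra.
Qed.

End Play.

(** * Two-point reactive strategies from a bracket *)

Section ReactiveStrategies.
Variables (R : realType) (SX SY : finType) (phi : SX -> SY -> R).
Local Notation hist := (history SX SY).

Lemma reactive_rcons (s0 : dist R SX) (sstar : dist R SX -> SY -> dist R SX)
    (h : hist) z :
  reactive s0 sstar (rcons h z) = sstar (reactive s0 sstar h) z.2.
Proof. by rewrite /reactive foldl_rcons. Qed.

Lemma cond_payoff_eq0 (sX : stratX R SX SY) sY g t :
  (forall h y, payoff phi (sX h) y = 0) -> cond_payoff phi sX sY g t = 0.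
Proof.
move=> sX0; elim: t g => [|t IH] g /=.
  rewrite /step_expect expect_swap -[RHS](expect_cst (sY g)).
  by apply: eq_expect => y; apply: sX0.
by rewrite -[RHS](step_expect_cst sX sY g 0); apply: eq_step_expect.
Qed.

Lemma constant_two_point_autocratic (tau : dist R SX) l : 0 <= l <= 1 ->
  (forall y, payoff phi tau y = 0) ->
  exists s0 sstar, two_point s0 sstar /\ autocratic phi l (reactive s0 sstar).
Proof.
move=> l01 tau0; exists tau, (fun _ _ => tau); split.
  exists tau, tau, 0, (fun _ _ => 0).
  by split=> [||a|p s d _ _ a]; rewrite ?lexx ?ler01 // mul0r add0r subr0 mul1r.
have reactive_tau h : reactive tau (fun _ _ => tau) h = tau.
  by case/lastP: h => // h z; rewrite /reactive foldl_rcons.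
apply: autocratic_of_disc_sum_le => // sY; exists 0 => n.
rewrite mul0r normr_le0; apply/eqP/big1 => t _.
by rewrite cond_payoff_eq0 ?mulr0 // => h y; rewrite reactive_tau.
Qed.

Section TwoPointConstruction.
Variables (tp tm : dist R SX) (x0 : SX) (l A B : R).
Hypotheses (tp_neq_tm : tp x0 != tm x0) (l_gt0 : 0 < l) (l_le1 : l <= 1).
Hypotheses (B_lt_A : B < A) (br : bracketing phi l tp tm A B).

Local Notation mix := (mix_dist tp tm).

(* Playing [mix p] is worth [bracket_value p]; after Y plays [y], X moves to
   the weight whose value makes up, after discounting, for the payoff just
   received. *)
Definition bracket_value (p : R) := B + p * (A - B).
Definition weight_of_value (v : R) := (v - B) / (A - B).
Definition next_weight (p : R) (y : SY) :=
  weight_of_value ((bracket_value p - payoff phi (mix p) y) / l).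

(* The reactive strategy only sees the current mixture: its weight is read off
   at a coordinate where tp and tm differ. *)
Definition weight_of (d : dist R SX) := (d x0 - tm x0) / (tp x0 - tm x0).
Definition init_weight := weight_of_value 0.
Definition bracket_s0 := mix init_weight.
Definition bracket_sstar (d : dist R SX) (y : SY) :=
  mix (next_weight (weight_of d) y).

Lemma AB_neq0 : A - B != 0.
Proof. by rewrite subr_eq0 gt_eqF. Qed.

Lemma bracket_value_weight v : bracket_value (weight_of_value v) = v.
Proof. by rewrite /bracket_value /weight_of_value; field; exact: AB_neq0. Qed.

Lemma weight_of_value_bounds v : B <= v <= A -> 0 <= weight_of_value v <= 1.
Proof.
move=> /andP[Bv vA]; have AB_gt0 : 0 < A - B by rewrite subr_gt0.
apply/andP; split; first by apply: divr_ge0; rewrite subr_ge0 // ltW.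
by rewrite ler_pdivrMr // mul1r lerD2r.
Qed.

Lemma init_weight_bounds : 0 <= init_weight <= 1.
Proof. by case: br => B_le0_le_A _; apply: weight_of_value_bounds. Qed.

Lemma bracket_value_bounds p : 0 <= p <= 1 -> B <= bracket_value p <= A.
Proof.
move=> /andP[p_ge0 p_le1]; have AB_ge0 : 0 <= A - B by rewrite subr_ge0 ltW.
by rewrite /bracket_value lerDl mulr_ge0 //= -lerBrDl ler_piMl.
Qed.

Lemma next_weight_bounds p y : 0 <= p <= 1 -> 0 <= next_weight p y <= 1.
Proof.
move=> p01; apply: weight_of_value_bounds.
rewrite ler_pdivlMr // ler_pdivrMr // ![_ * l]mulrC /payoff expect_mix //.
case: br => _ /(_ y) [/andP[p1 p2] /andP[m1 m2]]; move: p01 => /andP[p_ge0 p_le1].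
by rewrite /bracket_value /payoff in p1 p2 m1 m2 *; apply/andP; split; nra.
Qed.

Lemma bracket_value_next p y :
  bracket_value p = payoff phi (mix p) y + l * bracket_value (next_weight p y).
Proof. by rewrite bracket_value_weight; field; rewrite gt_eqF. Qed.

Lemma weight_ofE (d : dist R SX) p :
  (forall a, d a = p * tp a + (1 - p) * tm a) -> weight_of d = p.
Proof. by move=> dE; rewrite /weight_of !dE; field; rewrite subr_eq0. Qed.

Definition weight_hist (h : hist) :=
  foldl (fun p (z : SX * SY) => next_weight p z.2) init_weight h.

Lemma weight_hist_rcons h z :
  weight_hist (rcons h z) = next_weight (weight_hist h) z.2.
Proof. by rewrite /weight_hist foldl_rcons. Qed.

Lemma reactive_weight h :
  reactive bracket_s0 bracket_sstar h = mix (weight_hist h) /\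
  0 <= weight_hist h <= 1.
Proof.
elim/last_ind: h => [|h z [IH q01]].
  by split; last exact: init_weight_bounds.
rewrite reactive_rcons IH weight_hist_rcons /bracket_sstar.
rewrite (weight_ofE (mix_distE _ _ q01)).
by split; last exact: next_weight_bounds.
Qed.

Lemma two_point_construction : two_point bracket_s0 bracket_sstar.
Proof.
exists tp, tm, init_weight, next_weight; split.
- exact: init_weight_bounds.
- by move=> p y; apply: next_weight_bounds.
- by move=> a; rewrite mix_distE //; exact: init_weight_bounds.
- move=> p y d p01 dE a; rewrite /bracket_sstar (weight_ofE dE) mix_distE //.
  exact: next_weight_bounds.
Qed.

Local Notation sX := (reactive bracket_s0 bracket_sstar).

Lemma step_value sY g :
  step_expect sX sY g
    (fun a b => phi a b + l * bracket_value (weight_hist (rcons g (a, b))))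
  = bracket_value (weight_hist g).
Proof.
rewrite /step_expect; have [-> q01] := reactive_weight g.
rewrite expect_swap -[RHS](expect_cst (sY g)); apply: eq_expect => y.
rewrite (bracket_value_next _ y) expectD; congr (_ + _).
by under eq_expect do rewrite weight_hist_rcons /=; rewrite expect_cst.
Qed.

Fixpoint exp_value sY g n : R :=
  if n is n'.+1 then
    step_expect sX sY g (fun a b => exp_value sY (rcons g (a, b)) n')
  else bracket_value (weight_hist g).

Lemma exp_value_bounds sY g n : B <= exp_value sY g n <= A.
Proof.
elim: n g => [|n IH] g /=; last exact: step_expect_bounds.
by apply: bracket_value_bounds; case: (reactive_weight g).
Qed.

Lemma disc_sum_telescope sY g n :
  disc_sum phi l sX sY g n =
  bracket_value (weight_hist g) - l ^+ n * exp_value sY g n.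
Proof.
elim: n g => [|n IH] g; first by rewrite /disc_sum big_ord0 expr0 mul1r subrr.
rewrite disc_sumS; under [X in l * X]eq_step_expect => a b do rewrite IH.
rewrite -(step_value sY g) (step_expectD _ _ _ phi) [X in l * X]step_expectD.
by rewrite step_expectN !step_expectZ exprS /=; ring.
Qed.

Lemma autocratic_construction : autocratic phi l sX.
Proof.
apply: autocratic_of_disc_sum_le => [|sY]; first by rewrite ltW.
exists (A - B) => n; rewrite disc_sum_telescope bracket_value_weight sub0r normrN.
have ln_ge0 : 0 <= l ^+ n by rewrite exprn_ge0 ?ltW.
rewrite normrM (ger0_norm ln_ge0) mulrC ler_wpM2r //.
have /andP[lo hi] := exp_value_bounds sY [::] n; case: br => /andP[B_le0 A_ge0] _.
by rewrite ler_norml; apply/andP; split; lra.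
Qed.

End TwoPointConstruction.
End ReactiveStrategies.

Lemma two_point_of_bracketing (R : realType) (SX SY : finType)
    (phi : SX -> SY -> R) l tp tm A B :
  0 < l <= 1 -> bracketing phi l tp tm A B ->
  exists s0 sstar, two_point s0 sstar /\ autocratic phi l (reactive s0 sstar).
Proof.
move=> /andP[l_gt0 l_le1] br; have l01 : 0 <= l <= 1 by rewrite ltW.
have [/andP[B_le0 A_ge0] bounds] := br.
have [B_lt_A|A_le_B] := ltP B A; last first.
  apply: (constant_two_point_autocratic (tau := tp)) => // y.
  have [/andP[lo hi] _] := bounds y; apply/le_anti/andP.
  by split; nra.
have [tp_eq_tm|/forallPn[x0 tp_neq_tm]] := boolP [forall x, tp x == tm x];
  last first.
  exists (bracket_s0 tp tm A B), (bracket_sstar phi tp tm x0 l A B).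
  by split; [exact: two_point_construction | exact: autocratic_construction].
apply: (constant_two_point_autocratic (tau := tp)) => // y.
have tmE : payoff phi tm y = payoff phi tp y.
  by apply: eq_bigr => x _; rewrite (eqP (forallP tp_eq_tm x)).
have [/andP[lo _] /andP[_ hi]] := bounds y; rewrite tmE in hi.
by apply/le_anti/andP; split; nra.
Qed.


(** * Brackets from autocratic strategies *)

Section Necessity.
Variables (R : realType) (SX SY : finType).
Local Notation stX := (stratX R SX SY).
Local Notation stY := (stratY R SX SY).
Implicit Types (phi : SX -> SY -> R) (sX : stX) (sY : stY).

Lemma payoff_eq0_of_autocratic0 phi sX :
  autocratic phi 0 sX -> forall y, payoff phi (sX [::]) y = 0.
Proof.
move=> /(autocratic_discountedE _ _ ltr01) ac y.
have := ac (fun _ => point_dist R y); rewrite -cvg_shiftS.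
under eq_fun do rewrite disc_sumS mul0r addr0 (step_expect_point _ _ (erefl _)).
by move/(cvg_lim (@Rhausdorff R)); rewrite lim_cst.
Qed.

Lemma cond_payoff_response_le phi sX (yf : dist R SX -> SY) c g t :
  (forall d, payoff phi d (yf d) <= c) ->
  cond_payoff phi sX (fun h => point_dist R (yf (sX h))) g t <= c.
Proof.
move=> yf_le; elim: t g => [|t IH] g /=;
  rewrite (step_expect_point _ _ (erefl _)).
  exact: yf_le.
by rewrite -[c](expect_cst (sX g)); apply: ler_expect => a _; apply: IH.
Qed.

Lemma nonneg_response_of_cesaro phi sX :
  autocratic phi 1 sX -> exists tp : dist R SX, forall y, 0 <= payoff phi tp y.
Proof.
move=> ac; have [K _ phiK] := finite_payoff_bounded phi.
have payoff_leK d y : payoff phi d y <= K.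
  exact: le_trans (ler_norm _) (norm_payoff_le _ _ phiK).
have [tp tp_bounds] : exists tp : dist R SX, forall y, 0 <= payoff phi tp y <= K.
  apply: (dist_of_approx_bounds (f := phi)) => e e_gt0; apply: contrapT => no_tp.
  have response d : exists y, payoff phi d y < - e.
    apply: contrapT => no_y; apply: no_tp; exists d => y.
    rewrite sub0r (le_trans (payoff_leK d y)) ?lerDl ?(ltW e_gt0) // andbT leNgt.
    by apply/negP => lt_y; apply: no_y; exists y.
  have [yf yf_lt] := choice response.
  pose sY := fun h => point_dist R (yf (sX h)).
  have cesaro_le T : T.+1%:R^-1 * \sum_(t < T.+1) exp_payoff phi sX sY t <= - e.
    rewrite ler_pdivrMl ?ltr0n //.
    have -> : T.+1%:R * - e = \sum_(t < T.+1) - e.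
      by rewrite sumr_const card_ord mulr_natl.
    apply: ler_sum => t _; rewrite exp_payoffE.
    by apply: cond_payoff_response_le => d; rewrite ltW.
  have := ac sY; rewrite /autocratic ltxx => /cvgr_gt/(_ (- e)).
  rewrite oppr_lt0 => /(_ e_gt0) [N _ /(_ N (leqnn N))] /=.
  by rewrite ltNge cesaro_le.
by exists tp => y; case/andP: (tp_bounds y).
Qed.

Lemma bracketing_of_cesaro_autocratic phi sX :
  autocratic phi 1 sX -> exists tp tm A B, bracketing phi 1 tp tm A B.
Proof.
move=> ac; have [tp tp_ge0] := nonneg_response_of_cesaro ac.
have [tm tm_le0] : exists tm : dist R SX, forall y, payoff phi tm y <= 0.
  have [tm tm_ge0] := nonneg_response_of_cesaro (autocratic_opp ac).
  by exists tm => y; rewrite -oppr_ge0 -payoff_opp.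
have [K K_ge0 phiK] := finite_payoff_bounded phi.
exists tp, tm, K, 0; split=> [|y]; first by rewrite lexx K_ge0.
have := norm_payoff_le tp y phiK; have := norm_payoff_le tm y phiK.
rewrite subrr !mul0r mulr0 subr0 sub0r mul1r !ler_norml tp_ge0 tm_le0.
by move=> /andP[-> _] /andP[_ ->].
Qed.

End Necessity.

Section ContinuationValue.
Variables (R : realType) (SX SY : finType) (phi : SX -> SY -> R) (l : R).
Variables (sX : stratX R SX SY) (y0 : SY).
Hypotheses (l_gt0 : 0 < l) (l_lt1 : l < 1) (ac : autocratic phi l sX).
Local Notation stY := (stratY R SX SY).
Local Notation hist := (history SX SY).

Definition cont_value (sY : stY) (g : hist) := lim (disc_sum phi l sX sY g @ \oo).

Lemma cont_value_cvg sY g : disc_sum phi l sX sY g @ \oo --> cont_value sY g.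
Proof.
have [K _ phiK] := finite_payoff_bounded phi.
apply: (is_cvg_discounted_sum l_gt0 l_lt1) => t.
exact: norm_cond_payoff_le phiK.
Qed.

Lemma cont_value_bounded : exists K, forall sY g, `|cont_value sY g| <= K.
Proof.
have [K _ phiK] := finite_payoff_bounded phi; exists (K / (1 - l)) => sY g.
have sum_le n := norm_discounted_sum_le l_gt0 l_lt1
  (fun t => norm_cond_payoff_le sX sY g t phiK) n.
rewrite ler_norml; apply/andP; split.
- apply: limr_ge; first exact: cont_value_cvg.
  by apply: nearW => n; have := sum_le n; rewrite ler_norml => /andP[].
- apply: limr_le; first exact: cont_value_cvg.
  by apply: nearW => n; have := sum_le n; rewrite ler_norml => /andP[].
Qed.

Lemma cont_valueE sY g : cont_value sY g = step_expect sX sY g phi +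
  l * step_expect sX sY g (fun a b => cont_value sY (rcons g (a, b))).
Proof.
apply: cvg_lim; first exact: Rhausdorff.
rewrite -cvg_shiftS /=; under eq_fun do rewrite disc_sumS.
apply: cvgD; first exact: cvg_cst.
by apply: cvgMl_tmp; apply: cvg_step_expect => a b; apply: cont_value_cvg.
Qed.

Lemma cont_value_point sY g y : sY g = point_dist R y ->
  cont_value sY g = payoff phi (sX g) y +
    l * expect (sX g) (fun a => cont_value sY (rcons g (a, y))).
Proof. by move=> sYg; rewrite cont_valueE !(step_expect_point _ _ sYg). Qed.

Lemma cont_value_local sY1 sY2 g : (forall f, sY1 (g ++ f) = sY2 (g ++ f)) ->
  cont_value sY1 g = cont_value sY2 g.
Proof.
move=> sY12; rewrite /cont_value; congr (lim (_ @ \oo)); apply: funext => n.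
exact: disc_sum_local.
Qed.

Lemma cont_value_nil sY : cont_value sY [::] = 0.
Proof. exact/cvg_lim/(autocratic_discountedE _ _ l_lt1).1. Qed.

Inductive reachable : hist -> Prop :=
  | reachable_nil : reachable [::]
  | reachable_rcons g a b :
      reachable g -> 0 < sX g a -> reachable (rcons g (a, b)).

Definition splice (g : hist) (x : SX) (y : SY) (sY sY' : stY) : stY := fun h =>
  if h == g then point_dist R y
  else if prefix (rcons g (x, y)) h then sY h else sY' h.

Lemma rcons_cat_neq (g : hist) z f : (rcons g z ++ f == g) = false.
Proof.
apply/eqP => /(congr1 size); rewrite size_cat size_rcons => /eqP.
by rewrite addSn -addnS -{2}[size g]addn0 eqn_add2l.
Qed.

Lemma prefix_rcons_neq (g : hist) a x y f : a != x ->
  prefix (rcons g (x, y)) (rcons g (a, y) ++ f) = false.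
Proof.
move=> ax; apply/negbTE/negP => /prefixP [s].
rewrite !cat_rcons => /(congr1 (drop (size g))); rewrite !drop_size_cat //.
by case=> xa; rewrite xa eqxx in ax.
Qed.

Lemma cont_value_splice g x y sY sY' : cont_value (splice g x y sY sY') g =
  payoff phi (sX g) y + l * (sX g x * cont_value sY (rcons g (x, y)) +
    \sum_(a | a != x) sX g a * cont_value sY' (rcons g (a, y))).
Proof.
rewrite (@cont_value_point _ _ y) /splice ?eqxx //; congr (_ + l * _).
rewrite /expect (bigD1 x) //=; congr (_ * _ + _).
  by apply: cont_value_local => f; rewrite rcons_cat_neq prefix_prefix.
apply: eq_bigr => a ax; congr (_ * _); apply: cont_value_local => f.
by rewrite rcons_cat_neq prefix_rcons_neq.
Qed.

(* The spliced strategies play y at g and then follow sY1, resp. sY2, only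
   after g (x, y); their values at g agree by induction and differ only in the
   term weighted by sX g x > 0. *)
Lemma cont_value_indep g : reachable g ->
  forall sY1 sY2, cont_value sY1 g = cont_value sY2 g.
Proof.
elim=> [|{}g x y _ IH sXgx_gt0] sY1 sY2; first by rewrite !cont_value_nil.
have := IH (splice g x y sY1 sY2) (splice g x y sY2 sY2).
rewrite !cont_value_splice => /addrI /(mulfI (lt0r_neq0 l_gt0)) /addIr.
by move/(mulfI (lt0r_neq0 sXgx_gt0)).
Qed.

Definition reach_values :=
  [set r | exists sY g, reachable g /\ r = cont_value sY g].

Let reach_values0 : reach_values 0.
Proof.
exists (fun=> point_dist R y0), [::].
by rewrite cont_value_nil; split => //; constructor.
Qed.

Let reach_values_has_sup : has_sup reach_values.
Proof.
split; first by exists 0.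
have [K le_K] := cont_value_bounded; exists K => _ [sY [g [_ ->]]].
exact: le_trans (ler_norm _) (le_K sY g).
Qed.

Let reach_values_has_inf : has_inf reach_values.
Proof.
split; first by exists 0.
have [K le_K] := cont_value_bounded; exists (- K) => _ [sY [g [_ ->]]].
by have := le_K sY g; rewrite ler_norml => /andP[].
Qed.

Lemma payoff_bracket sY g y : reachable g ->
  cont_value sY g - l * sup reach_values <= payoff phi (sX g) y <=
  cont_value sY g - l * inf reach_values.
Proof.
move=> g_reach; pose sYy : stY := fun=> point_dist R y.
rewrite (cont_value_indep g_reach sY sYy) (@cont_value_point _ _ y) //.
set E := expect _ _; have in_values a : 0 < sX g a ->
    reach_values (cont_value sYy (rcons g (a, y))).
  move=> sXga; exists sYy, (rcons g (a, y)).
  by split => //; apply: reachable_rcons.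
have E_le : E <= sup reach_values.
  rewrite -[sup _](expect_cst (sX g)); apply: ler_expect => a /in_values.
  exact: sup_upper_bound reach_values_has_sup _.
have le_E : inf reach_values <= E.
  rewrite -[inf _](expect_cst (sX g)); apply: ler_expect => a /in_values.
  exact: ge_inf reach_values_has_inf.2 _.
have := ler_wpM2l (ltW l_gt0) E_le; have := ler_wpM2l (ltW l_gt0) le_E.
by move=> *; apply/andP; split; lra.
Qed.

Lemma bracketing_of_discounted_autocratic :
  exists tp tm A B, bracketing phi l tp tm A B.
Proof.
set M := sup reach_values; set m := inf reach_values.
have m_le0 : m <= 0 := ge_inf reach_values_has_inf.2 reach_values0.
have M_ge0 : 0 <= M := sup_upper_bound reach_values_has_sup reach_values0.
have [tp tp_bounds] : exists tp : dist R SX, forall y,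
    (1 - l) * M <= payoff phi tp y <= M - l * m.
  apply: (dist_of_approx_bounds (f := phi)) => e e_gt0.
  have [_ [sY [g [g_reach ->]]] near_M] :=
    sup_adherent e_gt0 reach_values_has_sup.
  have le_M : cont_value sY g <= M.
    by apply: sup_upper_bound reach_values_has_sup _ _; exists sY, g.
  exists (sX g) => y; have /andP[lo hi] := payoff_bracket sY y g_reach.
  rewrite -/M -/m /payoff in near_M lo hi.
  by apply/andP; split; nra.
have [tm tm_bounds] : exists tm : dist R SX, forall y,
    m - l * M <= payoff phi tm y <= (1 - l) * m.
  apply: (dist_of_approx_bounds (f := phi)) => e e_gt0.
  have [_ [sY [g [g_reach ->]]] near_m] :=
    inf_adherent e_gt0 reach_values_has_inf.
  have m_le : m <= cont_value sY g.
    by apply: (ge_inf reach_values_has_inf.2); exists sY, g.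
  exists (sX g) => y; have /andP[lo hi] := payoff_bracket sY y g_reach.
  rewrite -/M -/m /payoff in near_m lo hi.
  by apply/andP; split; nra.
by exists tp, tm, M, m; split => [|y]; [rewrite m_le0 | split].
Qed.

End ContinuationValue.

Lemma bracketing_of_autocratic (R : realType) (SX SY : finType) (y0 : SY)
    (phi : SX -> SY -> R) l (sX : stratX R SX SY) :
  0 < l <= 1 -> autocratic phi l sX ->
  exists tp tm A B, bracketing phi l tp tm A B.
Proof.
move=> /andP[l_gt0 l_le1] ac; have [l_lt1|l_ge1] := ltP l 1.
  exact: bracketing_of_discounted_autocratic y0 l_gt0 l_lt1 ac.
have l1 : l = 1 by apply/le_anti/andP.
by subst l; exact: bracketing_of_cesaro_autocratic ac.
Qed.

Theorem proposition8 (R : realType) (SX SY : finType)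
  (hSX : (0 < #|SX|)%N) (hSY : (0 < #|SY|)%N)
  (phi : SX -> SY -> R) (lambda : R) (hl : 0 <= lambda <= 1) :
  (exists sX : stratX R SX SY, autocratic phi lambda sX) ->
  forall lambda' : R, lambda <= lambda' <= 1 ->
  exists (s0 : dist R SX) (sstar : dist R SX -> SY -> dist R SX),
    two_point s0 sstar /\ autocratic phi lambda' (reactive s0 sstar).
Proof.
move=> [sX ac] l' /andP[le_ll' l'_le1]; have /andP[l_ge0 _] := hl.
have l'01 : 0 <= l' <= 1 by rewrite l'_le1 (le_trans l_ge0).
have [l_gt0|l_le0] := ltP 0 lambda; last first.
  have l0 : lambda = 0 by apply/le_anti/andP.
  subst lambda; apply: constant_two_point_autocratic l'01 _.
  exact: payoff_eq0_of_autocratic0 ac.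
have [y0 _] := card_gt0P hSY.
have l01 : 0 < lambda <= 1 by rewrite l_gt0 (le_trans le_ll').
have [tp [tm [A [B br]]]] := bracketing_of_autocratic y0 l01 ac.
apply: two_point_of_bracketing (bracketing_mono le_ll' br).
by rewrite (lt_le_trans l_gt0 le_ll').
Qed.
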